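(* Let $n\geq 2$ and let $S_n=K_{1,n-1}$ be the star on $n$ vertices, with centre vertex $v$ (a vertex adjacent to all others). Let $c_0:V(S_n)\to\mathbb{Z}$ be any initial chip configuration. Let $\ell_M$ be a leaf with the maximum number of chips in $c_0$ among all leaves and $\ell_m$ a leaf with the minimum number of chips in $c_0$ among all leaves, and let $d_0=c_0(\ell_M)-c_0(\ell_m)$. Then the configuration is tight with pre-period length at most \[\left\lceil\frac{\max \{ 0,\ c_0(v) - c_0(\ell_M),\ c_0(\ell_m) - c_0(v) \}}{n}\right\rceil + 2d_0.\]
   Context: Diffusion process: for a finite simple graph $G$ and a chip configuration $c_t:V(G)\to\mathbb{Z}$ (negative values allowed), the next configuration is defined simultaneously for every vertex $u$ by $c_{t+1}(u)=c_t(u)-|\{w\in N(u): c_t(u)>c_t(w)\}|+|\{w\in N(u): c_t(u)<c_t(w)\}|$. Tight means the process is eventually fixed or eventually periodic with period length 2, i.e. $c_{t+2}=c_t$ for some $t$; the pre-period length is then the least $t\geq0$ with $c_{t+p}=c_t$ where $p$ is the minimal period. *)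

From mathcomp Require Import all_boot all_order all_algebra.
Set Implicit Arguments. Unset Strict Implicit. Unset Printing Implicit Defensive.
Import Order.TTheory GRing.Theory Num.Theory.
Local Open Scope ring_scope.

Definition simple_graph (T : finType) (adj : rel T) : Prop :=
  irreflexive adj /\ symmetric adj.

Definition diffuse_step (T : finType) (adj : rel T) (c : T -> int) : T -> int :=
  fun u => c u - (#|[set w | adj u w && (c w < c u)]|)%:Z
               + (#|[set w | adj u w && (c u < c w)]|)%:Z.

Definition config (T : finType) (adj : rel T) (c0 : T -> int) (t : nat) : T -> int :=
  iter t (diffuse_step adj) c0.

Definition periodic_from (T : finType) (adj : rel T) (c0 : T -> int) (p t : nat) : Prop :=
  config adj c0 (t + p) = config adj c0 t.

(* Tight: eventually fixed or eventually 2-periodic, i.e. c_{t+2} = c_t for some t. *)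
Definition tight (T : finType) (adj : rel T) (c0 : T -> int) : Prop :=
  exists t, periodic_from adj c0 2 t.

Definition min_period (T : finType) (adj : rel T) (c0 : T -> int) (p : nat) : Prop :=
  (0 < p)%N /\ (exists t, periodic_from adj c0 p t) /\
  forall q, (0 < q)%N -> (exists t, periodic_from adj c0 q t) -> (p <= q)%N.

Definition preperiod (T : finType) (adj : rel T) (c0 : T -> int) (t : nat) : Prop :=
  exists p, min_period adj c0 p /\ periodic_from adj c0 p t /\
    forall s, periodic_from adj c0 p s -> (t <= s)%N.

Definition star_adj (T : finType) (v : T) : rel T :=
  fun x y => (x != y) && ((x == v) || (y == v)).

Definition ceil_div (m n : nat) : nat := ((m + n.-1) %/ n)%N.

(* On the star every leaf moves one chip toward the value of the centre, and the centre
   moves by (number of leaves above it) - (number of leaves below it).  While the centre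
   lies outside the leaf interval [m, M], all leaves move toward it and it moves #|T|.-1
   toward them, so the gap closes by #|T| per step, unless the centre jumps over every
   leaf, in which case the configuration is already 2-periodic.  Once the centre lies in
   [m, M], one step shrinks the spread M - m by at least one and leaves the centre at most
   one approach step away from the new interval, so each unit of spread costs at most two
   steps.  Negating all chip counts commutes with diffusion, which reduces a centre below
   the leaves to a centre above them.  Finally, 2-periodicity from time t bounds the
   pre-period by t whether the minimal period is 1 or 2. *)

From mathcomp Require Import all_boot all_order all_algebra.
From mathcomp Require Import zify.
From Stdlib Require Import FunctionalExtensionality.
Import Order.TTheory GRing.Theory Num.Theory.
Local Open Scope ring_scope.
Set Implicit Arguments.
Unset Strict Implicit.
Unset Printing Implicit Defensive.

Section Diffusion.
Variables (T : finType) (adj : rel T).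
Local Notation step := (diffuse_step adj).

Definition tight_by (c : T -> int) (B : nat) : Prop :=
  exists2 t, (t <= B)%N & periodic_from adj c 2 t.

Lemma config_step (c : T -> int) t : config adj (step c) t = config adj c t.+1.
Proof. by rewrite /config iterSr. Qed.

Lemma tight_by_step (c : T -> int) B : tight_by (step c) B -> tight_by c B.+1.
Proof. by case=> t tB; rewrite /periodic_from !config_step; exists t.+1. Qed.

Lemma tight_by_mono (c : T -> int) B B' : (B <= B')%N -> tight_by c B -> tight_by c B'.
Proof. by move=> BB' [t tB ht]; exists t => //; apply: leq_trans BB'. Qed.

Lemma diffuse_step_opp (c : T -> int) : step (fun u => - c u) = fun u => - step c u.
Proof.
apply: functional_extensionality => u; rewrite /diffuse_step.
under eq_finset => w do rewrite ltrN2.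
under [in X in _ + X]eq_finset => w do rewrite ltrN2.
by rewrite !opprD opprK addrAC.
Qed.

Lemma config_opp (c : T -> int) t :
  config adj (fun u => - c u) t = fun u => - config adj c t u.
Proof.
by elim: t => [|t IHt] //=; rewrite /config /= -/(config adj _ t) IHt diffuse_step_opp.
Qed.

Lemma tight_by_opp (c : T -> int) B : tight_by (fun u => - c u) B -> tight_by c B.
Proof.
case=> t tB; rewrite /periodic_from !config_opp => ht; exists t => //.
by apply: functional_extensionality => u; apply: oppr_inj; have /(congr1 (@^~ u)) := ht.
Qed.

End Diffusion.

Section Periodicity.
Variables (T : finType) (adj : rel T) (c0 : T -> int).
Local Notation cfg := (config adj c0).
Local Notation periodic := (periodic_from adj c0).

Lemma configD s t : cfg (t + s) = iter t (diffuse_step adj) (cfg s).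
Proof. exact: iterD. Qed.

Lemma periodic_fromD p s t : periodic p s -> periodic p (s + t).
Proof. by move=> e; rewrite /periodic_from addnAC ![(_ + t)%N]addnC !(configD _ t) e. Qed.

Lemma periodic_from_mull p s k : periodic p s -> cfg (s + k * p) = cfg s.
Proof.
move=> e; elim: k => [|k IHk]; first by rewrite addn0.
by rewrite mulSnr addnA periodic_fromD.
Qed.

Lemma config_fixed_after s j : periodic 1 s -> (s <= j)%N -> cfg j = cfg s.
Proof. by move=> hs /subnKC <-; rewrite -(muln1 (j - s)%N) periodic_from_mull. Qed.

Lemma fixed_from_periodic p s t : periodic p.+1 t -> periodic 1 s -> periodic 1 t.
Proof.
move=> hp hs; rewrite /periodic_from -(periodic_from_mull s (periodic_fromD 1 hp)).
rewrite -(periodic_from_mull s hp) !(config_fixed_after hs) // mulnS; lia.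
Qed.

Lemma periodic_fromP p s : reflect (periodic p s) [forall u, cfg (s + p) u == cfg s u].
Proof.
apply: (iffP forallP) => [e | e u]; last by rewrite e.
by apply: functional_extensionality => u; apply/eqP.
Qed.

Lemma preperiod_of_min_period p t :
  min_period adj c0 p -> periodic p t -> exists2 s, preperiod adj c0 s & (s <= t)%N.
Proof.
move=> hp ht; have ex : exists s, [forall u, cfg (s + p) u == cfg s u].
  by exists t; apply/periodic_fromP.
case: (ex_minnP ex) => s /periodic_fromP hs smin.
exists s; last by apply/smin/periodic_fromP.
by exists p; split=> //; split=> // s' /periodic_fromP/smin.
Qed.

Lemma min_period1 s : periodic 1 s -> min_period adj c0 1.
Proof. by move=> hs; split=> //; split=> [|q //]; exists s. Qed.

Lemma min_period2 t : periodic 2 t -> ~ periodic 1 t -> min_period adj c0 2.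
Proof.
move=> h2 h1; split=> //; split=> [|]; first by exists t.
case=> [|[|q]] // _ [s hs]; case: h1; exact: fixed_from_periodic h2 hs.
Qed.

Lemma preperiod_of_periodic2 t :
  periodic 2 t -> exists2 s, preperiod adj c0 s & (s <= t)%N.
Proof.
move=> h2; case: (periodic_fromP 1 t) => h1.
  exact: preperiod_of_min_period (min_period1 h1) h1.
exact: preperiod_of_min_period (min_period2 h2 h1) h2.
Qed.

End Periodicity.

Definition toward (x y : int) : int :=
  if y < x then y + 1 else if x < y then y - 1 else y.

Lemma toward_lt x y : y < x -> toward x y = y + 1.
Proof. by rewrite /toward => ->. Qed.

Lemma toward_gt x y : x < y -> toward x y = y - 1.
Proof. by move=> xy; rewrite /toward xy lt_gtF. Qed.

Lemma toward_homo x : {homo toward x : y z / y <= z}.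
Proof.
move=> y z yz; rewrite /toward.
by case: (ltrP y x) (ltrP x y) (ltrP z x) (ltrP x z) => ? [] ? [] ? [] ?; lia.
Qed.

Lemma toward_bound x y : y - 1 <= toward x y <= y + 1.
Proof. by rewrite /toward; case: (ltrP y x) (ltrP x y) => ? [] ?; lia. Qed.

Lemma toward_contract x m M :
  m <= x <= M -> m < M -> toward x M - toward x m <= M - m - 1.
Proof.
rewrite /toward => /andP[mx xM] mM.
by case: (ltrP m x) (ltrP x m) (ltrP M x) (ltrP x M) => ? [] ? [] ? [] ?; lia.
Qed.

Section Star.
Variables (T : finType) (v : T).
Local Notation step := (diffuse_step (star_adj v)).
Local Notation leaves := #|T|.-1.

Lemma diffuse_star_leaf (c : T -> int) l : l != v -> step c l = toward (c v) (c l).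
Proof.
move=> lv; have nbr (P : pred T) :
    [set w | star_adj v l w && P w] = if P v then [set v] else set0.
  apply/setP => w; rewrite /star_adj (negbTE lv) /=.
  by case: (eqVneq w v) => [->|wv]; case: ifP => Pv;
    rewrite !inE ?eqxx ?lv ?Pv ?(negbTE wv) ?andbF.
rewrite /diffuse_step !nbr /toward.
by case: ltrP => ?; case: ltrP => ?; rewrite ?cards1 ?cards0; lia.
Qed.

Lemma diffuse_star_centre (c : T -> int) : step c v =
  c v - #|[set l | l != v & c l < c v]|%:Z + #|[set l | l != v & c v < c l]|%:Z.
Proof.
by rewrite /diffuse_step; congr (_ - Posz _ + Posz _); apply: eq_card => w;
  rewrite !inE /star_adj eqxx andbT eq_sym.
Qed.

Lemma card_leaves_le (P : pred T) : (#|[set l | l != v & P l]| <= leaves)%N.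
Proof.
by rewrite -(cardsC1 v); apply/subset_leq_card/subsetP => l; rewrite !inE => /andP[].
Qed.

Lemma diffuse_star_centre_bound (c : T -> int) :
  c v - leaves%:Z <= step c v <= c v + leaves%:Z.
Proof.
rewrite diffuse_star_centre.
have := card_leaves_le (fun l => c l < c v); have := card_leaves_le (fun l => c v < c l).
lia.
Qed.

Lemma diffuse_star_centre_above (c : T -> int) :
  (forall l, l != v -> c l < c v) -> step c v = c v - leaves%:Z.
Proof.
move=> below; rewrite diffuse_star_centre -(cardsC1 v).
have -> : [set l | l != v & c l < c v] = [set~ v].
  by apply/setP => l; rewrite !inE; case: (eqVneq l v) => //= /below ->.
rewrite (@eq_card0 _ [set l | l != v & c v < c l]) ?addr0 // => l.
by rewrite !inE; case: (eqVneq l v) => //= /below /lt_gtF.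
Qed.

Lemma diffuse_star_centre_below (c : T -> int) :
  (forall l, l != v -> c v < c l) -> step c v = c v + leaves%:Z.
Proof.
move=> above; have := congr1 (@^~ v) (diffuse_step_opp (star_adj v) c).
rewrite /= diffuse_star_centre_above => [e|l /above]; last by rewrite ltrN2.
by apply/eqP; rewrite -eqr_opp -e opprD.
Qed.

Lemma diffuse_star_fixed (c : T -> int) : (forall l, l != v -> c l = c v) -> step c = c.
Proof.
move=> flat; apply: functional_extensionality => u; case: (eqVneq u v) => [->|uv].
  rewrite diffuse_star_centre !eq_card0 ?subr0 ?addr0 // => l;
  by rewrite !inE; case: eqVneq => //= /flat ->; rewrite ltxx.
by rewrite diffuse_star_leaf // flat // /toward ltxx.
Qed.

Definition leaves_within (c : T -> int) (m M : int) : Prop :=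
  forall l, l != v -> m <= c l <= M.

Lemma leaves_within_step (c : T -> int) m M : leaves_within c m M ->
  leaves_within (step c) (toward (c v) m) (toward (c v) M).
Proof.
move=> hc l lv; rewrite diffuse_star_leaf //.
by case/andP: (hc l lv) => ml lM; rewrite !toward_homo.
Qed.

Lemma leaves_within_opp (c : T -> int) m M :
  leaves_within c m M -> leaves_within (fun u => - c u) (- M) (- m).
Proof. by move=> hc l /hc; rewrite !lerN2 andbC. Qed.

Lemma tight_by_flat (c : T -> int) m M :
  leaves_within c m M -> m <= c v <= M -> M <= m -> tight_by (star_adj v) c 0.
Proof.
move=> hc /andP[mv vM] Mm; have fixed_c : step c = c.
  by apply: diffuse_star_fixed => l /hc /andP[ml lM]; lia.
by exists 0%N => //; rewrite /periodic_from add0n /config /= !fixed_c.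
Qed.

Lemma diffuse_star_above (c : T -> int) m M : leaves_within c m M -> M < c v ->
  leaves_within (step c) (m + 1) (M + 1) /\ step c v = c v - leaves%:Z.
Proof.
move=> hc Mv; split=> [l lv|].
  by rewrite diffuse_star_leaf // toward_lt; have := hc l lv; lia.
by apply: diffuse_star_centre_above => l /hc; lia.
Qed.

Lemma tight_by_overshoot (c : T -> int) m M : leaves_within c m M -> M < c v ->
  c v - leaves%:Z <= m -> tight_by (star_adj v) c 0.
Proof.
move=> hc Mv low; have [hc1 centre1] := diffuse_star_above hc Mv.
have back : step (step c) = c.
  apply: functional_extensionality => u; case: (eqVneq u v) => [->|uv].
    by rewrite diffuse_star_centre_below centre1 ?subrK // => l /hc1; lia.
  rewrite !(diffuse_star_leaf _ uv) centre1 (@toward_lt (c v) (c u)) ?toward_gt //;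
    have := hc u uv; lia.
by exists 0%N => //; rewrite /periodic_from add0n /config /= back.
Qed.

Lemma card_star_gt0 : (0 < #|T|)%N.
Proof. by apply/card_gt0P; exists v. Qed.

Section Approach.
Variable D : nat.
Hypothesis tight_inside : forall c m M, leaves_within c m M -> m <= c v <= M ->
  M - m <= D%:Z -> tight_by (star_adj v) c (2 * D).

Lemma tight_by_approach k (c : T -> int) m M :
  leaves_within c m M -> m <= M -> M - m <= D%:Z ->
  c v - M <= (k * #|T|)%N%:Z -> m - c v <= (k * #|T|)%N%:Z ->
  tight_by (star_adj v) c (k + 2 * D).
Proof.
(* Naming #|T| keeps lia from treating convertible but distinct copies of it as distinct. *)
have n_gt0 := card_star_gt0; set n := #|T| in n_gt0 *.
elim: k c m M => [|k IHk] c m M hc mM hD up down.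
  by apply: tight_inside hc _ hD; lia.
rewrite mulSn in up down.
wlog mv : c m M hc mM hD up down / m <= c v.
  move=> sym; case: (leP m (c v)) => [|vm]; first exact: sym _ _ _ hc mM hD up down.
  by apply: tight_by_opp; apply: (sym _ (- M) (- m)) => /=; [exact: leaves_within_opp|lia..].
case: (lerP (c v) M) => [vM|Mv].
  by apply: tight_by_mono (tight_inside hc _ hD) => //; lia.
case: (lerP (c v - leaves%:Z) m) => [low|high].
  exact: tight_by_mono (tight_by_overshoot hc Mv low).
have [hc1 centre1] := diffuse_star_above hc Mv.
by apply: tight_by_step; apply: (IHk _ _ _ hc1); rewrite ?centre1; lia.
Qed.

End Approach.

Lemma tight_by_inside D (c : T -> int) m M : leaves_within c m M -> m <= c v <= M ->
  M - m <= D%:Z -> tight_by (star_adj v) c (2 * D).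
Proof.
elim: D c m M => [|D IHD] c m M hc hv hD.
  by apply: tight_by_flat hc hv _; lia.
case: (lerP M m) => [Mm|mM].
  exact: tight_by_mono (tight_by_flat hc hv Mm).
have contract := toward_contract hv mM.
have mono := toward_homo (c v) (ltW mM).
have := toward_bound (c v) m; have := toward_bound (c v) M.
have := diffuse_star_centre_bound c; have := card_star_gt0.
set n := #|T| => n_gt0 centre_bound Mbound mbound.
have := tight_by_approach IHD (k := 1) (leaves_within_step hc) mono.
rewrite mul1n -/n => approach.
by apply: tight_by_mono (tight_by_step (approach _ _ _)); lia.
Qed.

Lemma tight_by_star k D (c : T -> int) m M :
  leaves_within c m M -> m <= M -> M - m <= D%:Z ->
  c v - M <= (k * #|T|)%N%:Z -> m - c v <= (k * #|T|)%N%:Z ->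
  tight_by (star_adj v) c (k + 2 * D).
Proof. exact: (tight_by_approach (@tight_by_inside D)). Qed.

End Star.

Lemma leq_ceil_div m d : (0 < d)%N -> (m <= ceil_div m d * d)%N.
Proof. by move=> d_gt0; have := ltn_ceil (m + d.-1) d_gt0; rewrite /ceil_div mulSn; lia. Qed.

Theorem theorem19 (n : nat) (hn : (2 <= n)%N) (v : 'I_n) (c0 : 'I_n -> int)
    (lM lm : 'I_n) (hlM : lM != v) (hlm : lm != v)
    (hmax : forall l : 'I_n, l != v -> c0 l <= c0 lM)
    (hmin : forall l : 'I_n, l != v -> c0 lm <= c0 l) :
  tight (star_adj v) c0 /\
  exists t : nat, preperiod (star_adj v) c0 t /\
    (t <= ceil_div (absz (Num.max (0:int) (Num.max (c0 v - c0 lM) (c0 lm - c0 v)))%R) n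
            + 2 * absz (c0 lM - c0 lm)%R)%N.
Proof.
set G := absz _; set D := absz _.
have [up down] : c0 v - c0 lM <= G%:Z /\ c0 lm - c0 v <= G%:Z.
  by rewrite /G; lia.
have ceilG := @leq_ceil_div G n (ltnW hn).
have leaves0 : leaves_within v c0 (c0 lm) (c0 lM) by move=> l lv; rewrite hmin ?hmax.
have [t tB periodic_t] : tight_by (star_adj v) c0 (ceil_div G n + 2 * D).
  by apply: tight_by_star leaves0 (hmin _ hlM) _ _ _; rewrite ?card_ord; lia.
split; first by exists t.
have [s pre st] := preperiod_of_periodic2 periodic_t.
by exists s; split=> //; apply: leq_trans tB.
Qed.
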